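(* Let $1\le p\le q\le\infty$ and $r\in(0,\infty]$. There exists a constant $C\ge1$ such that $$C^{-1}\|f\|_{\hat M^p_{q,r}}\le\|D_p(h)A(s)T(y)P(\xi)f\|_{\hat M^p_{q,r}}\le C\|f\|_{\hat M^p_{q,r}}$$ for any $f\in\hat M^p_{q,r}$ and any $(h,\xi,s,y)\in2^{\mathbb Z}\times\mathbb R\times\mathbb R\times\mathbb R$. Moreover, if $\xi=0$, the inequalities hold with $C=1$.
   Context: $\mathcal D=\{[k2^{-j},(k+1)2^{-j}):j,k\in\mathbb Z\}$. For $1\le p\le q\le\infty$, $\|f\|_{\hat M^p_{q,r}}=\big\||I|^{\frac1q-\frac1p}\|\hat f\|_{L^{q'}(I)}\big\|_{\ell^r_{I\in\mathcal D}}$ (with sup if $r=\infty$), $q'$ the Hölder conjugate. $(T(y)f)(x)=f(x-y)$, $(P(\xi)f)(x)=e^{-ix\xi}f(x)$, $(D_p(h)f)(x)=h^{1/p}f(hx)$, $A(s)=e^{-s\partial_x^3}$ (Fourier multiplier $e^{is\xi^3}$). *)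

From mathcomp Require Import all_boot all_order all_algebra.
From mathcomp Require Import all_classical all_reals all_analysis.
From mathcomp Require Import complex.
Set Implicit Arguments. Unset Strict Implicit. Unset Printing Implicit Defensive.
Import Order.TTheory GRing.Theory Num.Theory.
Local Open Scope ring_scope.
Local Open Scope classical_set_scope.

(* Functions are represented through their Fourier transform
   \hat f(xi) = \int e^{-i x xi} f(x) dx.
   A "Fourier-side function" is  F : R -> R[i]. *)

Section Defs.
Variable R : realType.

Definition cmod (z : R[i]) : R := Num.sqrt (complex.Re z ^+ 2 + complex.Im z ^+ 2).

Definition expi (t : R) : R[i] := Complex (cos t) (sin t).

Definition einv (p : \bar R) : R :=
  match p with
  | x%:E => x^-1
  | _ => 0
  end.

(* Hoelder conjugate exponent q' of q in [1,+oo]: 1/q + 1/q' = 1 *)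
Definition hconj (q : \bar R) : \bar R :=
  match q with
  | x%:E => if x == 1 then +oo%E else (x / (x - 1))%:E
  | _ => 1%E
  end.

Definition dyadic (j k : int) : set R :=
  `[k%:~R * 2 ^ (- j), (k + 1)%:~R * 2 ^ (- j)[%classic.

Definition dlen (j : int) : R := 2 ^ (- j).

Definition locnorm (q : \bar R) (j k : int) (F : R -> R[i]) : \bar R :=
  Lnorm (@lebesgue_measure R) (hconj q)
    (fun x => ((\1_(dyadic j k) x : R) * cmod (F x))%:E).

Definition wloc (p q : \bar R) (j k : int) (F : R -> R[i]) : \bar R :=
  ((dlen j `^ (einv q - einv p))%:E * locnorm q j k F)%E.

Definition hatM_norm (p q r : \bar R) (F : R -> R[i]) : \bar R :=
  match r with
  | r'%:E => poweR (esum [set: int * int]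
                     (fun jk => poweR (wloc p q jk.1 jk.2 F) r')) r'^-1
  | _ => ereal_sup [set wloc p q jk.1 jk.2 F | jk in [set: int * int]]
  end.

Definition in_hatM (p q r : \bar R) (F : R -> R[i]) : Prop :=
  measurable_fun setT (fun x => complex.Re (F x)) /\
  measurable_fun setT (fun x => complex.Im (F x)) /\
  (hatM_norm p q r F < +oo)%E.

(* The operators, acting on F = \hat f (Fourier side):
   (T(y) f)^(xi)   = e^{-i y xi} \hat f(xi)
   (P(eta) f)^(xi) = \hat f(xi + eta)            [P(eta)f = e^{-i x eta} f]
   (A(s) f)^(xi)   = e^{i s xi^3} \hat f(xi)
   (D_p(h) f)^(xi) = h^{1/p - 1} \hat f(xi / h)  [D_p(h)f = h^{1/p} f(h .)] *)
Definition hatT (y : R) (F : R -> R[i]) : R -> R[i] :=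
  fun xi => expi (- (y * xi)) * F xi.
Definition hatP (eta : R) (F : R -> R[i]) : R -> R[i] :=
  fun xi => F (xi + eta).
Definition hatA (s : R) (F : R -> R[i]) : R -> R[i] :=
  fun xi => expi (s * xi ^+ 3) * F xi.
Definition hatD (p : \bar R) (h : R) (F : R -> R[i]) : R -> R[i] :=
  fun xi => Complex (h `^ (einv p - 1)) 0 * F (xi / h).

End Defs.

From mathcomp Require Import all_boot all_order all_algebra.
From mathcomp Require Import all_classical all_reals all_analysis.
From mathcomp Require Import complex.
From mathcomp Require Import measurable_realfun ess_sup_inf hoelder.
From mathcomp Require Import ring lra.
Import Order.TTheory GRing.Theory Num.Theory.
Local Open Scope ring_scope.
Local Open Scope classical_set_scope.

(* Only the modulus of the Fourier transform enters the norm, so the phases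
   coming from A(s) and T(y) disappear.  On the Fourier side D_p(2^m) acts by
   the dilation xi -> xi / 2^m, which maps the dyadic intervals of generation
   j onto those of generation j + m; its factor 2^(m(1/p - 1)) exactly
   compensates the change of |I|^(1/q - 1/p) and of the L^q' norm, so after
   reindexing j the norm is unchanged.  P(xi) translates the Fourier side by
   xi; every translate of a dyadic interval is covered by two dyadic intervals
   of the same generation, which bounds the norm computed on the translated
   grid by a constant times the original one, and translating back gives the
   reverse bound. *)

Section Lnorm_real.
Context d (T : measurableType d) (R : realType) (mu : {measure set T -> \bar R}).
Local Open Scope ereal_scope.

Lemma measurable_EFin_powR_norm (g : T -> R) (r : R) : measurable_fun setT g ->
  measurable_fun setT (fun x => (`|g x| `^ r)%:E).
Proof.
move=> mg; apply/measurable_EFinP; apply: (measurableT_comp (measurable_powR r)).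
exact: measurableT_comp.
Qed.

Lemma Lnorm_scale (Q : \bar R) (c : R) (g : T -> R) : 0 < Q -> (0 <= c)%R ->
  measurable_fun setT g ->
  Lnorm mu Q (fun x => (c * g x)%:E) = c%:E * Lnorm mu Q (fun x => (g x)%:E).
Proof.
move=> Q_gt0 c_ge0 mg; rewrite unlock; case: Q Q_gt0 => [r| |] // r_gt0.
- under eq_integral do rewrite abse_EFin normrM poweR_EFin powRM // EFinM.
  under [in RHS]eq_integral do rewrite abse_EFin poweR_EFin.
  rewrite ge0_integralZl_EFin //; last exact: measurable_EFin_powR_norm.
  rewrite poweRM ?lee_fin ?powR_ge0 //; last first.
    by apply: integral_ge0 => x _; rewrite lee_fin powR_ge0.
  by rewrite poweR_EFin -powRrM mulfV ?gt_eqF // powRr1 // ger0_norm.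
- case: ifP => muT_gt0; last by rewrite mule0.
  rewrite -ess_supZl //; congr ess_sup; apply/funext => x /=.
  by rewrite normrM ger0_norm // EFinM.
Qed.

Lemma Lnorm_le (Q : \bar R) (f g : T -> R) : 0 < Q ->
  (forall x, (0 <= f x <= g x)%R) ->
  measurable_fun setT f -> measurable_fun setT g ->
  Lnorm mu Q (fun x => (f x)%:E) <= Lnorm mu Q (fun x => (g x)%:E).
Proof.
move=> Q_gt0 fg mf mg; rewrite unlock; case: Q Q_gt0 => [r| |] // r_gt0.
- under eq_integral do rewrite abse_EFin poweR_EFin.
  under [in X in _ <= X]eq_integral do rewrite abse_EFin poweR_EFin.
  have int_ge0 (h : T -> R) : 0 <= \int[mu]_x (`|h x| `^ r)%:E.
    by apply: integral_ge0 => x _; rewrite lee_fin powR_ge0.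
  apply: gt0_ler_poweR; rewrite ?in_itv /= ?leey ?andbT ?int_ge0 //.
    by rewrite invr_ge0 ltW // -lte_fin.
  apply: ge0_le_integral => //; try exact: measurable_EFin_powR_norm.
  move=> x _.
  have /andP[f_ge0 le_fg] := fg x; have g_ge0 := le_trans f_ge0 le_fg.
  have r_ge0 : (0 <= r)%R by rewrite ltW // -lte_fin.
  by rewrite lee_fin ge0_ler_powR ?nnegrE // !ger0_norm.
- case: ifP => // _; apply: le_ess_sup; apply: nearW => x /=.
  have /andP[f_ge0 le_fg] := fg x.
  by rewrite lee_fin !ger0_norm // (le_trans f_ge0 le_fg).
Qed.

Lemma Lnorm_le_add (Q : \bar R) (f g1 g2 : T -> R) : 1 <= Q ->
  (forall x, (0 <= f x <= g1 x + g2 x)%R) -> measurable_fun setT f ->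
  measurable_fun setT g1 -> measurable_fun setT g2 ->
  Lnorm mu Q (fun x => (f x)%:E) <=
  Lnorm mu Q (fun x => (g1 x)%:E) + Lnorm mu Q (fun x => (g2 x)%:E).
Proof.
move=> Q_ge1 fg mf mg1 mg2; apply: le_trans (eminkowski mu mg1 mg2 Q_ge1).
apply: (@Lnorm_le Q f (g1 \+ g2)%R) => //; first exact: lt_le_trans Q_ge1.
exact: measurable_funD.
Qed.

End Lnorm_real.

Section affine_change_of_variables.
Context {R : realType}.
Local Notation mu := (@lebesgue_measure R).

Lemma measurable_affine (a b : R) :
  measurable_fun (T := measurableTypeR R) (U := measurableTypeR R) setT
    (fun x : R => a * x + b).
Proof. by apply: measurable_funD => //; exact: measurable_funM. Qed.

Lemma lebesgue_measure_affine (a b : R) A : 0 < a -> measurable A ->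
  mu ((fun x => a * x + b) @^-1` A) = (a^-1%:E * mu A)%E.
Proof.
move=> a_gt0 mA; pose aff x := a * x + b.
suff mu_scaled X : measurable X -> mu X = (a%:E * mu (aff @^-1` X))%E.
  by rewrite [in RHS]mu_scaled // muleA -EFinM mulVf ?mul1e ?gt_eqF.
(* The measure structure of [pushforward] is indexed by the measurability
   proof of the map, so it cannot be inferred and is named explicitly. *)
move=> mX; pose image_measure :=
  measure_function_pushforward__canonical__measure_function_Measure mu
    (measurable_affine a b).
apply: (@lebesgue_measure_unique R (mscale (NngNum (ltW a_gt0)) image_measure)) => //.
move=> _ [[x1 x2] _ <-] /=.
transitivity (a%:E * mu (aff @^-1` `]x1, x2]%classic))%E; last by [].
have -> : aff @^-1` `]x1, x2] = `](x1 - b) / a, (x2 - b) / a]%classic.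
  apply/seteqP; split => x /=; rewrite !in_itv /= => /andP[h1 h2]; apply/andP; split.
  - by rewrite ltr_pdivrMr // ltrBlDr mulrC.
  - by rewrite ler_pdivlMr // lerBrDr mulrC.
  - by rewrite /aff -ltrBlDr mulrC -ltr_pdivrMr.
  - by rewrite /aff -lerBrDr mulrC -ler_pdivlMr.
rewrite !lebesgue_measure_itv /= !lte_fin ltr_pM2r ?invr_gt0 // ltrD2r.
case: ifP => _; last by rewrite mule0.
by rewrite -EFinM; congr EFin; field; rewrite gt_eqF.
Qed.

Lemma ge0_integral_affine (a b : R) (g : R -> \bar R) : 0 < a ->
  measurable_fun setT g -> (forall x, 0 <= g x)%E ->
  (\int[mu]_x g (a * x + b)%R = a^-1%:E * \int[mu]_x g x)%E.
Proof.
move=> a_gt0 mg g_ge0.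
have := ge0_integral_pushforward (measurable_affine a b) mu measurableT mg
  (fun y _ => g_ge0 y).
rewrite preimage_setT => <-.
pose image_measure :=
  measure_function_pushforward__canonical__measure_function_Measure mu
    (measurable_affine a b).
have ainv_gt0 : 0 < a^-1 by rewrite invr_gt0.
pose k := NngNum (ltW ainv_gt0).
have -> : (a^-1%:E * \int[mu]_x g x = \int[mscale k mu]_x g x)%E.
  by rewrite ge0_integral_mscale.
change (\int[image_measure]_x g x = \int[mscale k mu]_x g x)%E.
apply: eq_measure_integral => A mA _.
change (mu ((fun x : R => a * x + b) @^-1` A) = (a^-1%:E * mu A)%E).
exact: lebesgue_measure_affine.
Qed.

Lemma ae_affine (a b : R) (P : R -> Prop) : 0 < a ->
  (\forall x \ae mu, P x) -> \forall x \ae mu, P (a * x + b).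
Proof.
move=> a_gt0 [A [mA A0 notP_A]]; exists ((fun x => a * x + b) @^-1` A); split.
- by rewrite -[X in measurable X]setTI; exact: measurable_affine.
- by rewrite lebesgue_measure_affine // A0 mule0.
- by move=> x /= /notP_A.
Qed.

Lemma ess_sup_affine (a b : R) (f : R -> \bar R) : 0 < a ->
  ess_sup mu (fun x => f (a * x + b)) = ess_sup mu f.
Proof.
(* [filterS] below cannot infer this filter instance. *)
have ae_mu := @ae_filter_ringOfSetsType _ (measurableTypeR R) R mu.
move=> a_gt0; apply/eqP; rewrite eq_le; apply/andP; split; apply/ess_supP.
  have := ae_affine a b (fun x => f x <= ess_sup mu f)%E a_gt0 (ess_sup_ge mu f).
  by apply: filterS => //.
have ainv_gt0 : 0 < a^-1 by rewrite invr_gt0.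
have := ae_affine a^-1 (- b / a)
  (fun x => f (a * x + b)%R <= ess_sup mu (fun x => f (a * x + b)%R))%E
  ainv_gt0 (ess_sup_ge mu _).
apply: filterS => // x /=.
by rewrite mulrDr mulrA mulfV ?gt_eqF // mul1r mulrCA mulfV ?gt_eqF // mulr1 addrNK.
Qed.

Lemma Lnorm_affine (Q : \bar R) (a b : R) (g : R -> R) : (0 < Q)%E -> 0 < a ->
  measurable_fun setT g ->
  Lnorm mu Q (fun x => (g (a * x + b))%:E) =
  ((a `^ (- einv Q))%:E * Lnorm mu Q (fun x => (g x)%:E))%E.
Proof.
move=> Q_gt0 a_gt0 mg; rewrite unlock; case: Q Q_gt0 => [r| |] // r_gt0.
- under eq_integral do rewrite abse_EFin poweR_EFin.
  under [in RHS]eq_integral do rewrite abse_EFin poweR_EFin.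
  rewrite (ge0_integral_affine a b (fun y => (`|g y| `^ r)%:E) a_gt0); last 2 first.
  - exact: measurable_EFin_powR_norm.
  - by move=> x; rewrite lee_fin powR_ge0.
  rewrite poweRM ?lee_fin ?invr_ge0 ?(ltW a_gt0) //; last first.
    by apply: integral_ge0 => x _; rewrite lee_fin powR_ge0.
  by rewrite poweR_EFin -powR_inv1 ?ltW // -powRrM mulN1r.
- case: ifP => _ /=; last by rewrite mule0.
  by rewrite oppr0 powRr0 mul1e (ess_sup_affine a b (abse \o (fun x => (g x)%:E))).
Qed.

End affine_change_of_variables.

Section complex_modulus.
Context {R : realType}.

Lemma cmod_ge0 (z : R[i]) : 0 <= cmod z.
Proof. exact: sqrtr_ge0. Qed.

Lemma cmodM (z w : R[i]) : cmod (z * w) = cmod z * cmod w.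
Proof.
case: z w => a b [c d]; rewrite /cmod -sqrtrM ?addr_ge0 ?sqr_ge0 //=.
by congr Num.sqrt; ring.
Qed.

Lemma cmod_expi (t : R) : cmod (expi t) = 1.
Proof. by rewrite /cmod /expi /= cos2Dsin2 sqrtr1. Qed.

Lemma cmod_real (c : R) : 0 <= c -> cmod (Complex c 0) = c.
Proof. by move=> c_ge0; rewrite /cmod /= expr0n addr0 sqrtr_sqr ger0_norm. Qed.

Lemma measurable_cmod (F : R -> R[i]) :
  measurable_fun setT (fun x => complex.Re (F x)) ->
  measurable_fun setT (fun x => complex.Im (F x)) ->
  measurable_fun setT (fun x => cmod (F x)).
Proof.
move=> mRe mIm.
apply: (measurableT_comp (continuous_measurable_fun (@sqrt_continuous R))).
by apply: measurable_funD; exact: measurable_funX.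
Qed.

End complex_modulus.

Section Hoelder_conjugate.
Context {R : realType}.

Lemma hconj_ge1 (q : \bar R) : (1 <= q)%E -> (1 <= hconj q)%E.
Proof.
case: q => [x| |] //= x_ge1; case: ifP => [_|/negbT x_neq1]; rewrite ?leey //.
have x_gt1 : 1 < x by rewrite lt_neqAle eq_sym x_neq1 -lee_fin.
by rewrite lee_fin ler_pdivlMr ?subr_gt0 // mul1r lerBlDr lerDl.
Qed.

Lemma hconj_gt0 (q : \bar R) : (1 <= q)%E -> (0 < hconj q)%E.
Proof. by move=> /hconj_ge1; apply: lt_le_trans. Qed.

Lemma einv_hconj (q : \bar R) : (1 <= q)%E -> einv (hconj q) = 1 - einv q.
Proof.
case: q => [x| |] //= x_ge1; rewrite ?invr1 ?subr0 //.
case: ifP => [/eqP ->|/negbT x_neq1] /=; first by rewrite invr1 subrr.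
have x_neq0 : x != 0 by rewrite gt_eqF // (lt_le_trans ltr01) // -lee_fin.
have x1_neq0 : x - 1 != 0 by rewrite subr_eq0.
by rewrite invf_div; field.
Qed.

End Hoelder_conjugate.

Section shifted_dyadic_intervals.
Context {R : realType}.
Local Notation mu := (@lebesgue_measure R).
Implicit Types (p q : \bar R) (j k : int) (x : R) (phi : R -> R).

Definition dyadic_shift j k x : set R :=
  `[k%:~R * 2 ^ (- j) + x, (k + 1)%:~R * 2 ^ (- j) + x[%classic.

Lemma dyadic_shift0 j k : dyadic_shift j k 0 = dyadic j k.
Proof. by rewrite /dyadic_shift /dyadic !addr0. Qed.

Lemma in_dyadic_shift j k x u : (u \in dyadic_shift j k x) =
  (k%:~R * 2 ^ (- j) + x <= u) && (u < (k + 1)%:~R * 2 ^ (- j) + x).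
Proof. by rewrite /dyadic_shift mem_setE in_itv. Qed.

Lemma measurable_indic_dyadic_shiftM j k x phi : measurable_fun setT phi ->
  measurable_fun setT (fun u => (\1_(dyadic_shift j k x) u : R) * phi u).
Proof.
by move=> mphi; apply: measurable_funM => //; apply: measurable_indic; exact: measurable_itv.
Qed.

Definition wloc_shift p q phi x j k : \bar R :=
  ((@dlen R j `^ (einv q - einv p))%:E *
   Lnorm mu (hconj q) (fun u => ((\1_(dyadic_shift j k x) u : R) * phi u)%:E))%E.

Lemma wlocE p q j k (F : R -> R[i]) :
  wloc p q j k F = wloc_shift p q (fun u => cmod (F u)) 0 j k.
Proof. by rewrite /wloc_shift dyadic_shift0. Qed.

Lemma wloc_shift_ge0 p q phi x j k : (0 <= wloc_shift p q phi x j k)%E.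
Proof. by rewrite mule_ge0 ?lee_fin ?powR_ge0 ?Lnorm_ge0. Qed.

Lemma wloc_shift_comp_addr p q phi x y j k : (1 <= q)%E -> measurable_fun setT phi ->
  wloc_shift p q (fun u => phi (u + x)) y j k = wloc_shift p q phi (y + x) j k.
Proof.
move=> q_ge1 mphi; congr (_ * _)%E.
pose g u := (\1_(dyadic_shift j k (y + x)) u : R) * phi u.
transitivity (Lnorm mu (hconj q) (fun u => (g (1 * u + x))%:E)).
  congr Lnorm; apply/funext => u; rewrite /g mul1r; congr (_ * _)%:E.
  by rewrite !indicE !in_dyadic_shift !addrA lerD2r ltrD2r.
rewrite Lnorm_affine ?hconj_gt0 //; last exact: measurable_indic_dyadic_shiftM.
by rewrite powR1 mul1e.
Qed.

Lemma indic_dyadic_dilate j k (m : int) x u :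
  \1_(dyadic j k) u = \1_(dyadic_shift (j + m) k x) ((2 ^ m)^-1 * u + x) :> R.
Proof.
rewrite -dyadic_shift0 !indicE !in_dyadic_shift !addr0 lerD2r ltrD2r.
have scale z : z%:~R * 2 ^ (- (j + m)) = (2 ^ m)^-1 * (z%:~R * (2 : R) ^ (- j)).
  by rewrite invr_expz opprD expfzDr ?pnatr_eq0 // mulrA mulrC.
have inv2m_gt0 : 0 < ((2 : R) ^ m)^-1 by rewrite invr_gt0 exprz_gt0.
by rewrite !scale ler_pM2l // ltr_pM2l.
Qed.

Lemma dlen_dilation_weight j (m : int) (a b : R) :
  @dlen R j `^ (b - a) * ((2 ^ m) `^ (a - 1) * ((2 ^ m)^-1) `^ (- (1 - b))) =
  @dlen R (j + m) `^ (b - a).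
Proof.
have two_ge0 : (0 : R) <= 2 by [].
rewrite /dlen invr_expz -!(powR_intmul _ two_ge0) -!powRrM.
rewrite -!powRD ?pnatr_eq0 ?implybT //.
by congr (_ `^ _); rewrite !intrN !intrD; ring.
Qed.

Lemma cmod_hatDATP p h s y xi (F : R -> R[i]) u : 0 < h ->
  cmod (hatD p h (hatA s (hatT y (hatP xi F))) u) =
  h `^ (einv p - 1) * cmod (F (h^-1 * u + xi)).
Proof.
move=> h_gt0; rewrite /hatD /hatA /hatT /hatP !cmodM cmod_real ?powR_ge0 //.
by rewrite !cmod_expi !mul1r [u / h]mulrC.
Qed.

Lemma wloc_hatDATP p q (F : R -> R[i]) (m : int) (xi s y : R) j k :
  (1 <= q)%E -> measurable_fun setT (fun u => cmod (F u)) ->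
  wloc p q j k (hatD p (2 ^ m) (hatA s (hatT y (hatP xi F)))) =
  wloc_shift p q (fun u => cmod (F u)) xi (j + m) k.
Proof.
move=> q_ge1 mF; set h : R := 2 ^ m; have h_gt0 : 0 < h by exact: exprz_gt0.
pose g u := (\1_(dyadic_shift (j + m) k xi) u : R) * cmod (F u).
have mg : measurable_fun setT g by exact: measurable_indic_dyadic_shiftM.
rewrite /wloc /locnorm /wloc_shift.
under eq_Lnorm => u do
  rewrite cmod_hatDATP // (indic_dyadic_dilate _ _ m xi) mulrCA -/(g _).
rewrite Lnorm_scale ?hconj_gt0 ?powR_ge0 //; last first.
  exact: (measurableT_comp mg (measurable_affine _ _)).
rewrite Lnorm_affine ?hconj_gt0 ?invr_gt0 // einv_hconj //.
by rewrite !muleA -!EFinM -mulrA dlen_dilation_weight.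
Qed.

Definition dyadic_floor j x : int := Num.floor (x / 2 ^ (- j)).

Lemma indic_dyadic_shift_le_cover j k x u (n := dyadic_floor j x) :
  \1_(dyadic_shift j k x) u <= \1_(dyadic j (k + n)) u + \1_(dyadic j (k + n + 1)) u :> R.
Proof.
rewrite {}/n /dyadic_floor; set t : R := 2 ^ (- j); set n := Num.floor _.
have t_gt0 : 0 < t by exact: exprz_gt0.
have n_le : n%:~R * t <= x by rewrite -ler_pdivlMr // floor_le.
have lt_n1 : x < n%:~R * t + t.
  by rewrite -[X in _ + X]mul1r -mulrDl -intrD1 -ltr_pdivrMr // floorD1_gt.
rewrite !indicE; case: (boolP (u \in dyadic_shift j k x)) => [|_]; last first.
  by rewrite addr_ge0.
rewrite -!dyadic_shift0 !in_dyadic_shift !addr0 !intrD !mulrDl !mul1r -/t.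
move=> /andP[lo hi].
have [u_lt|u_ge] := ltP u (k%:~R * t + n%:~R * t + t).
  have -> : k%:~R * t + n%:~R * t <= u by lra.
  by rewrite /= addr0.
have -> : u < k%:~R * t + n%:~R * t + t + t by lra.
by rewrite andbF add0r.
Qed.

Lemma wloc_shift_le_cover p q phi x j k (n := dyadic_floor j x) :
  (1 <= q)%E -> measurable_fun setT phi -> (forall u, 0 <= phi u) ->
  (wloc_shift p q phi x j k <=
   wloc_shift p q phi 0 j (k + n) + wloc_shift p q phi 0 j (k + n + 1))%E.
Proof.
move=> q_ge1 mphi phi_ge0; rewrite /wloc_shift -ge0_muleDr ?Lnorm_ge0 //.
apply: lee_wpmul2l; first by rewrite lee_fin powR_ge0.
apply: Lnorm_le_add; rewrite ?hconj_ge1 //; try exact: measurable_indic_dyadic_shiftM.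
move=> u; rewrite mulr_ge0 ?indicE ?ler0n //= -mulrDl ler_wpM2r // !dyadic_shift0 -!indicE.
exact: indic_dyadic_shift_le_cover.
Qed.

End shifted_dyadic_intervals.

Section lr_norm.
Context {R : realType}.
Local Open Scope ereal_scope.

Let ge0_in_itv (x : \bar R) : 0 <= x -> x \in `[0%E, +oo%E]%R.
Proof. by rewrite in_itv /= leey andbT. Qed.

Definition lr_norm {I : choiceType} (r : \bar R) (V : I -> \bar R) : \bar R :=
  match r with
  | r'%:E => poweR (esum [set: I] (fun i => poweR (V i) r')) r'^-1
  | _ => ereal_sup [set V i | i in [set: I]]
  end.

Lemma lr_norm_reindex (I : choiceType) r (V : I -> \bar R) (e : I -> I) :
  bijective e -> lr_norm r (V \o e) = lr_norm r V.
Proof.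
move=> [e' eK e'K]; case: r => [r| |] /=.
- congr poweR; rewrite (@reindex_esum R _ _ setT setT e (fun i => V i `^ r)) //.
  by rewrite setTT_bijective; exists e'.
- congr ereal_sup; apply/seteqP; split => _ [i _ <-]; first by exists (e i).
  by exists (e' i); rewrite //= e'K.
- congr ereal_sup; apply/seteqP; split => _ [i _ <-]; first by exists (e i).
  by exists (e' i); rewrite //= e'K.
Qed.

Lemma esumZl (T : choiceType) (I : set T) (c : R) (a : T -> \bar R) :
  (0 < c)%R -> (forall i, 0 <= a i) ->
  esum I (fun i => c%:E * a i) = c%:E * esum I a.
Proof.
move=> c_gt0 a_ge0; rewrite /esum -ereal_sup_pZl //; congr ereal_sup.
apply/seteqP; split => y.
  by move=> [X IX <-]; exists (\sum_(x \in X) a x); [exists X | rewrite ge0_mule_fsumr].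
by move=> [_ [X IX <-] <-]; exists X => //; rewrite ge0_mule_fsumr.
Qed.

Lemma poweRD_le (r : R) (A B : \bar R) : (0 < r)%R -> 0 <= A -> 0 <= B ->
  (A + B) `^ r <= (2 `^ r)%:E * (A `^ r + B `^ r).
Proof.
move=> r_gt0 A_ge0 B_ge0; wlog le_AB : A B A_ge0 B_ge0 / A <= B.
  move=> le_sym; have [le_AB|/ltW le_BA] := leP A B; first exact: le_sym.
  by rewrite addeC [A `^ r + _]addeC; exact: le_sym.
apply: (@le_trans _ _ ((B + B) `^ r)).
  apply: gt0_ler_poweR; rewrite ?ge0_in_itv ?adde_ge0 ?leeD2r //.
  exact: ltW.
rewrite -mule2n -mule_natl poweRM ?lee_fin // poweR_EFin.
by rewrite lee_wpmul2l ?lee_fin ?powR_ge0 // leeDr // poweR_ge0.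
Qed.

(* [2] comes from [(a + b)^r <= 2^r (a^r + b^r)] and [2^(1/r)] from the two
   rearranged copies of [W] in [lr_norm_le_sum_reindex]. *)
Definition lr_const (r : \bar R) : R :=
  if r is r'%:E then 2 * 2 `^ r'^-1 else 2.

Lemma lr_const_ge1 r : 0 < r -> (1 <= lr_const r)%R.
Proof.
case: r => [r| |] //= r_gt0; last lra.
have : ((2 : R) `^ 0 <= 2 `^ r^-1)%R.
  by apply: ler_powR; rewrite ?ler1n // invr_ge0 ltW // -lte_fin.
rewrite powRr0; lra.
Qed.

Lemma lr_norm_le_sum_reindex (I : choiceType) r (V W : I -> \bar R) (e1 e2 : I -> I) :
  0 < r -> bijective e1 -> bijective e2 ->
  (forall i, 0 <= V i) -> (forall i, 0 <= W i) ->
  (forall i, V i <= W (e1 i) + W (e2 i)) ->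
  lr_norm r V <= (lr_const r)%:E * lr_norm r W.
Proof.
move=> r_gt0 e1_bij e2_bij V_ge0 W_ge0 le_VW.
case: r r_gt0 => [r| |] // r_gt0 /=; last first.
  apply: ge_ereal_sup => _ [i _ <-]; set S := ereal_sup _.
  have W_le i' : W i' <= S by apply: ereal_sup_ubound; exists i'.
  apply: le_trans (le_VW i) _; rewrite mule_natl mule2n.
  by apply: leeD; exact: W_le.
have {}r_gt0 : (0 < r)%R by rewrite -lte_fin.
set S := esum [set: I] (fun i => W i `^ r).
have S_ge0 : 0 <= S by apply: esum_ge0 => i _; exact: poweR_ge0.
have esum_reindex e : bijective e -> esum [set: I] (fun i => W (e i) `^ r) = S.
  move=> e_bij; rewrite /S (@reindex_esum R _ _ setT setT e (fun i => W i `^ r)) //.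
  by rewrite setTT_bijective.
have le_sum : esum [set: I] (fun i => V i `^ r) <= (2 `^ r)%:E * (S + S).
  rewrite -{1}(esum_reindex _ e1_bij) -(esum_reindex _ e2_bij) -esumD; last 2 first.
  - by move=> i _; exact: poweR_ge0.
  - by move=> i _; exact: poweR_ge0.
  rewrite -esumZl ?powR_gt0 // => [|i]; last by rewrite adde_ge0 ?poweR_ge0.
  apply: le_esum => i _.
  apply: le_trans (poweRD_le _ _ _ r_gt0 (W_ge0 _) (W_ge0 _)).
  by apply: gt0_ler_poweR; rewrite ?ge0_in_itv ?adde_ge0 ?le_VW // ltW.
have rinv_ge0 : (0 <= r^-1)%R by rewrite invr_ge0 ltW.
apply: le_trans (gt0_ler_poweR rinv_ge0 _ _ le_sum) _.
- by rewrite ge0_in_itv // esum_ge0 // => i _; exact: poweR_ge0.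
- by rewrite ge0_in_itv // mule_ge0 ?lee_fin ?powR_ge0 ?adde_ge0.
rewrite poweRM ?lee_fin ?powR_ge0 ?adde_ge0 // poweR_EFin.
rewrite -powRrM mulfV ?gt_eqF // powRr1 // -mule2n -mule_natl poweRM ?lee_fin //.
by rewrite poweR_EFin muleA -EFinM.
Qed.

End lr_norm.

Section hatM_norm_invariance.
Context {R : realType}.
Variables (p q r : \bar R).
Hypothesis q_ge1 : (1 <= q)%E.

Definition shifted_hatM_norm (x : R) (phi : R -> R) : \bar R :=
  lr_norm r (fun jk : int * int => wloc_shift p q phi x jk.1 jk.2).

Lemma hatM_normE (F : R -> R[i]) :
  hatM_norm p q r F = shifted_hatM_norm 0 (fun u => cmod (F u)).
Proof.
have -> : hatM_norm p q r F = lr_norm r (fun jk => wloc p q jk.1 jk.2 F) by [].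
by congr lr_norm; apply/funext => jk; rewrite wlocE.
Qed.

Lemma hatM_norm_hatDATP (F : R -> R[i]) (m : int) (xi s y : R) :
  measurable_fun setT (fun u => cmod (F u)) ->
  hatM_norm p q r (hatD p (2 ^ m) (hatA s (hatT y (hatP xi F)))) =
  shifted_hatM_norm xi (fun u => cmod (F u)).
Proof.
move=> mF; set G := hatD _ _ _.
have -> : hatM_norm p q r G = lr_norm r (fun jk => wloc p q jk.1 jk.2 G) by [].
pose V jk := wloc_shift p q (fun u => cmod (F u)) xi jk.1 jk.2.
transitivity (lr_norm r (V \o fun jk => (jk.1 + m, jk.2))).
  by congr lr_norm; apply/funext => jk; rewrite /V /= wloc_hatDATP.
apply: lr_norm_reindex; exists (fun jk => (jk.1 - m, jk.2)) => -[j k] /=.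
  by rewrite addrK.
by rewrite subrK.
Qed.

Hypothesis r_gt0 : (0 < r)%E.

Lemma shifted_hatM_norm_le (x : R) (phi : R -> R) :
  measurable_fun setT phi -> (forall u, 0 <= phi u) ->
  (shifted_hatM_norm x phi <= (lr_const r)%:E * shifted_hatM_norm 0 phi)%E.
Proof.
move=> mphi phi_ge0; pose n j := dyadic_floor j x.
apply: (@lr_norm_le_sum_reindex _ _ _ _ _ (fun jk => (jk.1, jk.2 + n jk.1))
  (fun jk => (jk.1, jk.2 + n jk.1 + 1))) => //.
- by exists (fun jk => (jk.1, jk.2 - n jk.1)) => -[j k] /=; rewrite ?addrK ?subrK.
- by exists (fun jk => (jk.1, jk.2 - n jk.1 - 1)) => -[j k] /=; congr (_, _); ring.
- by move=> jk; exact: wloc_shift_ge0.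
- by move=> jk; exact: wloc_shift_ge0.
- by move=> [j k]; exact: wloc_shift_le_cover.
Qed.

Lemma shifted_hatM_norm_ge (x : R) (phi : R -> R) :
  measurable_fun setT phi -> (forall u, 0 <= phi u) ->
  (shifted_hatM_norm 0 phi <= (lr_const r)%:E * shifted_hatM_norm x phi)%E.
Proof.
move=> mphi phi_ge0; pose psi u := phi (u + x).
have mpsi : measurable_fun setT psi.
  by apply: measurableT_comp => //; exact: measurable_funD.
have -> : shifted_hatM_norm 0 phi = shifted_hatM_norm (- x) psi.
  by congr lr_norm; apply/funext => jk; rewrite wloc_shift_comp_addr // addNr.
have -> : shifted_hatM_norm x phi = shifted_hatM_norm 0 psi.
  by congr lr_norm; apply/funext => jk; rewrite wloc_shift_comp_addr // add0r.
by apply: shifted_hatM_norm_le => // u; exact: phi_ge0.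
Qed.

End hatM_norm_invariance.

Theorem lemma2p3 (R : realType) (p q r : \bar R)
  (hp1 : (1 <= p)%E) (hpq : (p <= q)%E) (hr : (0 < r)%E) :
  (exists C : R, 1 <= C /\
    forall (F : R -> R[i]), in_hatM p q r F ->
    forall (k : int) (xi s y : R),
      let G := hatD p (2 ^ k) (hatA s (hatT y (hatP xi F))) in
      (C^-1%:E * hatM_norm p q r F <= hatM_norm p q r G)%E /\
      (hatM_norm p q r G <= C%:E * hatM_norm p q r F)%E) /\
  (forall (F : R -> R[i]), in_hatM p q r F ->
    forall (k : int) (s y : R),
      let G := hatD p (2 ^ k) (hatA s (hatT y (hatP 0 F))) in
      (1^-1%:E * hatM_norm p q r F <= hatM_norm p q r G)%E /\
      (hatM_norm p q r G <= 1%:E * hatM_norm p q r F)%E).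
Proof.
have q_ge1 : (1 <= q)%E := le_trans hp1 hpq.
have C_ge1 : 1 <= lr_const r := lr_const_ge1 r hr.
have C_gt0 : 0 < lr_const r := lt_le_trans ltr01 C_ge1.
split.
- exists (lr_const r); split => // F [mRe [mIm _]] k xi s y G.
  have mF := measurable_cmod F mRe mIm.
  rewrite /G hatM_norm_hatDATP // hatM_normE; split.
  + by rewrite lee_pdivrMl //; apply: shifted_hatM_norm_ge => // u; exact: cmod_ge0.
  + by apply: shifted_hatM_norm_le => // u; exact: cmod_ge0.
- move=> F [mRe [mIm _]] k s y G.
  rewrite /G hatM_norm_hatDATP ?hatM_normE ?invr1 ?mul1e //.
  exact: measurable_cmod.
Qed.
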